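(* Let $N>0$, $\beta>0$, $0<\rho<1$, $\sigma>0$, $\gamma>0$ and $0\le\pi_1\le\pi_2\le 1$ be constants, and let $\Delta_1,\Delta_2:[0,\infty)\to[0,\infty)$ be continuous with $\Delta_i(t)\to0$ as $t\to+\infty$ and $\overline{\Delta}_i:=\int_0^\infty\Delta_i(t)\,dt\le N$ ($i=1,2$). Write $q(t)=\Delta_1(t)\pi_1+\Delta_2(t)(\pi_2-\pi_1)$ and consider $$S'=-\tfrac{\beta}{N}S(1-\rho)I-\tfrac{S}{N}q(t),\quad E'=\tfrac{\beta}{N}S(1-\rho)I-\sigma E,\quad I'=\sigma E-\gamma I,\quad R'=\gamma I,\quad V'=\tfrac{S}{N}q(t),$$ with initial data $S_0>0$, $E_0,I_0,R_0,V_0\ge 0$, $S_0+E_0+I_0+R_0+V_0=N$. Let $(S_\infty,0,0,N-S_\infty-V_\infty,V_\infty)$ be the limit of the solution as $t\to+\infty$. Then $$\frac{\beta(1-\rho)}{\gamma N}S_\infty-\log S_\infty+\frac{\beta(1-\rho)}{\gamma N}V_\infty=\frac{1}{N}\big(\pi_1\overline{\Delta}_1+(\pi_2-\pi_1)\overline{\Delta}_2\big)+\frac{\beta(1-\rho)}{\gamma N}(N-R_0)-\log S_0.$$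
   Context: SEIR epidemic model with vaccination in a population of constant size $N$; $R_0$ denotes the initial value of the removed compartment $R$ (not a reproductive number). The solution converges as $t\to\infty$ to a point of the form $(S_\infty,0,0,N-S_\infty-V_\infty,V_\infty)$. *)

From Stdlib Require Import Reals.
From Coquelicot Require Import Coquelicot.
Open Scope R_scope.

Definition vacc_rate (pi1 pi2 : R) (D1 D2 : R -> R) (t : R) : R :=
  D1 t * pi1 + D2 t * (pi2 - pi1).

Definition continuous_on_halfline (f : R -> R) : Prop :=
  (forall t, 0 < t -> continuous f t) /\
  filterlim f (at_right 0) (locally (f 0)).

From Stdlib Require Import Reals Lra.
From Coquelicot Require Import Coquelicot.
Open Scope R_scope.

(* Write b = beta (1 - rho) / (gamma N) and P(t) = int_0^t q.  The S- and R-equations say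
   S' = - S (b R' + P' / N), so S(t) exp (b (R(t) - R0) + P(t) / N) is constant on (0, oo).
   Its limit at 0+ is S0 and its limit at +oo is S_oo exp (b (N - S_oo - V_oo - R0) + P_oo / N)
   with P_oo = pi1 D1bar + (pi2 - pi1) D2bar; taking logarithms gives the identity. *)

Section FilterlimR.

Context {T : Type} {F : (T -> Prop) -> Prop} {FF : Filter F}.

Lemma filterlim_Rplus_comp (f g : T -> R) (a b : R) :
  filterlim f F (locally a) -> filterlim g F (locally b) ->
  filterlim (fun x => f x + g x) F (locally (a + b)).
Proof.
  intros Hf Hg.
  exact (filterlim_comp_2 f g Rplus Hf Hg (@filterlim_plus _ R_NormedModule a b)).
Qed.

Lemma filterlim_Rmult_comp (f g : T -> R) (a b : R) :
  filterlim f F (locally a) -> filterlim g F (locally b) ->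
  filterlim (fun x => f x * g x) F (locally (a * b)).
Proof.
  intros Hf Hg.
  exact (filterlim_comp_2 f g Rmult Hf Hg (@filterlim_mult R_AbsRing a b)).
Qed.

Lemma filterlim_mul_exp (f g : T -> R) (a b : R) :
  filterlim f F (locally a) -> filterlim g F (locally b) ->
  filterlim (fun x => f x * exp (g x)) F (locally (a * exp b)).
Proof.
  intros Hf Hg. apply filterlim_Rmult_comp; [exact Hf |].
  eapply filterlim_comp; [exact Hg | apply continuous_exp].
Qed.

Lemma filterlim_affine_comb (u v : T -> R) (c d k r p : R) :
  filterlim u F (locally r) -> filterlim v F (locally p) ->
  filterlim (fun x => c * (u x - k) + d * v x) F (locally (c * (r - k) + d * p)).
Proof.
  intros Hu Hv.
  apply filterlim_Rplus_comp; apply filterlim_Rmult_comp;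
    try apply filterlim_Rplus_comp; try apply filterlim_const; assumption.
Qed.

End FilterlimR.

Lemma filterlim_vacc_rate {F : (R -> Prop) -> Prop} {FF : Filter F}
  (pi1 pi2 : R) (D1 D2 : R -> R) (t : R) :
  filterlim D1 F (locally (D1 t)) -> filterlim D2 F (locally (D2 t)) ->
  filterlim (vacc_rate pi1 pi2 D1 D2) F (locally (vacc_rate pi1 pi2 D1 D2 t)).
Proof.
  intros H1 H2.
  apply filterlim_Rplus_comp; apply filterlim_Rmult_comp;
    try apply filterlim_const; assumption.
Qed.

Lemma continuous_on_halfline_vacc_rate (pi1 pi2 : R) (D1 D2 : R -> R) :
  continuous_on_halfline D1 -> continuous_on_halfline D2 ->
  continuous_on_halfline (vacc_rate pi1 pi2 D1 D2).
Proof.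
  intros [H1 H1r] [H2 H2r]. split.
  - intros t Ht. exact (filterlim_vacc_rate _ _ _ _ t (H1 t Ht) (H2 t Ht)).
  - exact (filterlim_vacc_rate _ _ _ _ 0 H1r H2r).
Qed.

Lemma is_RInt_gen_vacc_rate {Fa Fb : (R -> Prop) -> Prop} {FFa : Filter Fa}
  {FFb : Filter Fb} (pi1 pi2 : R) (D1 D2 : R -> R) (l1 l2 : R) :
  is_RInt_gen D1 Fa Fb l1 -> is_RInt_gen D2 Fa Fb l2 ->
  is_RInt_gen (vacc_rate pi1 pi2 D1 D2) Fa Fb (pi1 * l1 + (pi2 - pi1) * l2).
Proof.
  intros H1 H2.
  eapply is_RInt_gen_ext;
    [| exact (is_RInt_gen_plus _ _ _ _ (is_RInt_gen_scal _ pi1 _ H1)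
                                    (is_RInt_gen_scal _ (pi2 - pi1) _ H2))].
  apply filter_forall. intros ab x _. unfold vacc_rate.
  change (pi1 * D1 x + (pi2 - pi1) * D2 x = D1 x * pi1 + D2 x * (pi2 - pi1)). ring.
Qed.

Lemma filterlim_RInt_of_is_RInt_gen {Fb : (R -> Prop) -> Prop} {FFb : Filter Fb}
  (f : R -> R) (a l : R) :
  is_RInt_gen f (at_point a) Fb l -> filterlim (RInt f a) Fb (locally l).
Proof.
  intros H P HP.
  destruct (H P HP) as [Q Rb HQ HRb Hprod].
  unfold filtermap. apply (filter_imp Rb); [| exact HRb].
  intros x Hx. destruct (Hprod a x HQ Hx) as [y [Hy Py]].
  simpl in Hy. rewrite (is_RInt_unique _ _ _ _ Hy). exact Py.
Qed.

Section HalflineIntegral.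

Variables (f : R -> R) (a : R).
Hypothesis f_cont : forall t, a < t -> continuous f t.
Hypothesis f_right : filterlim f (at_right a) (locally (f a)).

Lemma continuous_extension_left (b : R) : a < b ->
  {g : R -> R | (forall c, c < b -> continuous g c) /\
                (forall c, a <= c < b -> g c = f c)}.
Proof.
  intros Hab.
  destruct (C0_extension_left f (f a) a b Hab) as [g [Hg [Hgf Hga]]].
  - intros c Hc. apply f_cont. lra.
  - exact f_right.
  - exists g. split; [exact Hg |].
    intros c [[Hac | <-] Hcb]; [apply Hgf; lra | exact Hga].
Qed.

Lemma ex_RInt_halfline (x : R) : a <= x -> ex_RInt f a x.
Proof.
  intros Hax.
  destruct (continuous_extension_left (x + 1)) as [g [Hg Hgf]]; [lra |].
  apply (ex_RInt_ext g).
  - rewrite Rmin_left, Rmax_right by lra. intros z Hz. apply Hgf. lra.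
  - apply (ex_RInt_continuous (V := R_CompleteNormedModule)).
    rewrite Rmin_left, Rmax_right by lra. intros z Hz. apply Hg. lra.
Qed.

Lemma is_derive_RInt_halfline (t : R) : a < t -> is_derive (RInt f a) t (f t).
Proof.
  intros Hat. apply (is_derive_RInt f (RInt f a) a t); [| exact (f_cont t Hat)].
  assert (Hd : 0 < t - a) by lra.
  exists (mkposreal _ Hd). intros y Hy.
  change (Rabs (y - t) < t - a) in Hy. apply Rabs_def2 in Hy.
  apply (RInt_correct (V := R_CompleteNormedModule)), ex_RInt_halfline. lra.
Qed.

Lemma RInt_at_right : filterlim (RInt f a) (at_right a) (locally 0).
Proof.
  destruct (continuous_extension_left (a + 1)) as [g [Hg Hgf]]; [lra |].
  assert (Hcont : filterlim (RInt g a) (locally a) (locally 0)).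
  { replace 0 with (RInt g a a) by exact (RInt_point (V := R_CompleteNormedModule) a g).
    apply (continuous_RInt_0 g a (RInt g a)). exists (mkposreal 1 Rlt_0_1). intros x Hx.
    apply (RInt_correct (V := R_CompleteNormedModule)),
      (ex_RInt_continuous (V := R_CompleteNormedModule)).
    change (Rabs (x - a) < 1) in Hx. apply Rabs_def2 in Hx.
    intros z Hz. apply Hg. pose proof (Rmax_lub_lt a x (a + 1)). lra. }
  apply (filterlim_ext_loc (RInt g a)).
  - exists (mkposreal 1 Rlt_0_1). intros y Hy Hay.
    change (Rabs (y - a) < 1) in Hy. apply Rabs_def2 in Hy.
    apply RInt_ext. rewrite Rmin_left, Rmax_right by lra.
    intros z Hz. apply Hgf. lra.
  - exact (filterlim_filter_le_1 _ (filter_le_within _) Hcont).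
Qed.

End HalflineIntegral.

Lemma is_derive_eq (f : R -> R) (x l l' : R) :
  is_derive f x l -> l = l' -> is_derive f x l'.
Proof. intros H <-. exact H. Qed.

Lemma is_derive_affine_comb (u v : R -> R) (t c d k du dv : R) :
  is_derive u t du -> is_derive v t dv ->
  is_derive (fun x => c * (u x - k) + d * v x) t (c * du + d * dv).
Proof.
  intros Hu Hv. eapply is_derive_eq.
  - apply (is_derive_plus (V := R_NormedModule)); apply is_derive_scal; [| exact Hv].
    apply (is_derive_minus (V := R_NormedModule)); [exact Hu | apply is_derive_const].
  - cbn. ring.
Qed.

Lemma is_derive_mul_exp_0 (f g : R -> R) (t df dg : R) :
  is_derive f t df -> is_derive g t dg -> df = - f t * dg ->
  is_derive (fun x => f x * exp (g x)) t 0.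
Proof.
  intros Hf Hg Hdf. eapply is_derive_eq.
  - apply (is_derive_mult (K := R_AbsRing)); [exact Hf | | exact Rmult_comm].
    apply (is_derive_comp (V := R_NormedModule) exp); [apply is_derive_exp | exact Hg].
  - rewrite Hdf. cbn. ring.
Qed.

Lemma is_derive_0_const_halfline (h : R -> R) (a : R) :
  (forall t, a < t -> is_derive h t 0) ->
  forall s t, a < s -> a < t -> h s = h t.
Proof.
  intros Hh s t Hs Ht.
  destruct (MVT_gen h s t (fun _ => 0)) as [c [_ Hc]].
  - intros x Hx. apply Hh. pose proof (Rmin_glb_lt s t a Hs Ht). lra.
  - intros x Hx. apply continuity_pt_filterlim.
    apply (ex_derive_continuous (V := R_NormedModule)). exists 0. apply Hh.
    pose proof (Rmin_glb_lt s t a Hs Ht). lra.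
  - lra.
Qed.

Lemma const_halfline_lim_eq (h : R -> R) (a l m : R) :
  (forall s t, a < s -> a < t -> h s = h t) ->
  filterlim h (at_right a) (locally l) ->
  filterlim h (Rbar_locally p_infty) (locally m) -> l = m.
Proof.
  intros Hh Hl Hm.
  assert (Hc : forall F, ProperFilter' F -> F (fun t => a < t) ->
                 forall k, filterlim h F (locally k) -> k = h (a + 1)).
  { intros F FF HF k Hk. apply (filterlim_locally_unique h); [exact Hk |].
    apply (filterlim_ext_loc (fun _ => h (a + 1))); [| apply filterlim_const].
    apply (filter_imp (fun t => a < t)); [| exact HF].
    intros t Ht. apply Hh; lra. }
  assert (Hr : at_right a (fun t => a < t)) by (exists (mkposreal 1 Rlt_0_1); tauto).
  assert (Hi : Rbar_locally p_infty (fun t => a < t)) by (exists a; tauto).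
  rewrite (Hc _ _ Hr l Hl), (Hc _ _ Hi m Hm). reflexivity.
Qed.

Lemma mul_exp_limits_eq (f g df dg : R -> R) (a fa ga fi gi : R) :
  (forall t, a < t -> is_derive f t (df t)) ->
  (forall t, a < t -> is_derive g t (dg t)) ->
  (forall t, a < t -> df t = - f t * dg t) ->
  filterlim f (at_right a) (locally fa) -> filterlim g (at_right a) (locally ga) ->
  filterlim f (Rbar_locally p_infty) (locally fi) ->
  filterlim g (Rbar_locally p_infty) (locally gi) ->
  fa * exp ga = fi * exp gi.
Proof.
  intros Hf Hg Hfg Hfa Hga Hfi Hgi.
  apply (const_halfline_lim_eq (fun x => f x * exp (g x)) a).
  - apply is_derive_0_const_halfline. intros t Ht.
    exact (is_derive_mul_exp_0 f g t _ _ (Hf t Ht) (Hg t Ht) (Hfg t Ht)).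
  - exact (filterlim_mul_exp f g fa ga Hfa Hga).
  - exact (filterlim_mul_exp f g fi gi Hfi Hgi).
Qed.

Lemma ln_eq_of_mul_exp (s0 s g : R) : 0 < s0 -> s0 = s * exp g -> ln s = ln s0 - g.
Proof.
  intros Hs0 Heq.
  assert (Hs : 0 < s).
  { pose proof (exp_pos g). destruct (Rlt_le_dec 0 s) as [Hpos | Hnpos]; [exact Hpos | nra]. }
  rewrite Heq, ln_mult, ln_exp by (exact Hs || apply exp_pos). ring.
Qed.

Theorem mainTheorem3
  (N beta rho sigma gamma pi1 pi2 : R)
  (D1 D2 : R -> R) (D1bar D2bar : R)
  (S E I Rm V : R -> R)
  (S0 E0 I0 R0 V0 Sinf Vinf : R) :
  0 < N -> 0 < beta -> 0 < rho < 1 -> 0 < sigma -> 0 < gamma ->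
  0 <= pi1 -> pi1 <= pi2 -> pi2 <= 1 ->
  (* the Delta_i : [0,oo) -> [0,oo), continuous, vanishing at infinity,
     with integral over [0,oo) equal to Delta_i-bar <= N *)
  continuous_on_halfline D1 -> continuous_on_halfline D2 ->
  (forall t, 0 <= t -> 0 <= D1 t) -> (forall t, 0 <= t -> 0 <= D2 t) ->
  is_lim D1 p_infty 0 -> is_lim D2 p_infty 0 ->
  is_RInt_gen D1 (at_point 0) (Rbar_locally p_infty) D1bar ->
  is_RInt_gen D2 (at_point 0) (Rbar_locally p_infty) D2bar ->
  D1bar <= N -> D2bar <= N ->
  (* initial data *)
  0 < S0 -> 0 <= E0 -> 0 <= I0 -> 0 <= R0 -> 0 <= V0 ->
  S0 + E0 + I0 + R0 + V0 = N ->
  S 0 = S0 -> E 0 = E0 -> I 0 = I0 -> Rm 0 = R0 -> V 0 = V0 ->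
  (* (S,E,I,R,V) solves the SEIR system with vaccination on [0,oo) *)
  continuous_on_halfline S -> continuous_on_halfline E ->
  continuous_on_halfline I -> continuous_on_halfline Rm ->
  continuous_on_halfline V ->
  (forall t, 0 < t ->
     is_derive S t (- (beta / N) * S t * (1 - rho) * I t
                    - S t / N * vacc_rate pi1 pi2 D1 D2 t)) ->
  (forall t, 0 < t ->
     is_derive E t ((beta / N) * S t * (1 - rho) * I t - sigma * E t)) ->
  (forall t, 0 < t -> is_derive I t (sigma * E t - gamma * I t)) ->
  (forall t, 0 < t -> is_derive Rm t (gamma * I t)) ->
  (forall t, 0 < t -> is_derive V t (S t / N * vacc_rate pi1 pi2 D1 D2 t)) ->
  (* the solution converges to (Sinf, 0, 0, N - Sinf - Vinf, Vinf) *)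
  is_lim S p_infty Sinf -> is_lim E p_infty 0 -> is_lim I p_infty 0 ->
  is_lim Rm p_infty (N - Sinf - Vinf) -> is_lim V p_infty Vinf ->
  beta * (1 - rho) / (gamma * N) * Sinf - ln Sinf
    + beta * (1 - rho) / (gamma * N) * Vinf
  = / N * (pi1 * D1bar + (pi2 - pi1) * D2bar)
    + beta * (1 - rho) / (gamma * N) * (N - R0) - ln S0.
Proof.
  intros HN _ _ _ Hgamma _ _ _ HD1 HD2 _ _ _ _ HD1bar HD2bar _ _ HS0 _ _ _ _ _
    HS_0 _ _ HR_0 _ [_ HS_right] _ _ [_ HR_right] _ HdS _ _ HdR _ HS_lim _ _ HR_lim _.
  set (b := beta * (1 - rho) / (gamma * N)).
  set (q := vacc_rate pi1 pi2 D1 D2).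
  set (Qbar := pi1 * D1bar + (pi2 - pi1) * D2bar).
  destruct (continuous_on_halfline_vacc_rate pi1 pi2 D1 D2 HD1 HD2) as [Hq Hq_right].
  assert (Hcons : S0 * exp (b * (R0 - R0) + / N * 0)
                  = Sinf * exp (b * (N - Sinf - Vinf - R0) + / N * Qbar)).
  { apply (mul_exp_limits_eq S (fun t => b * (Rm t - R0) + / N * RInt q 0 t)
             (fun t => - (beta / N) * S t * (1 - rho) * I t - S t / N * q t)
             (fun t => b * (gamma * I t) + / N * q t) 0).
    - exact HdS.
    - intros t Ht. apply is_derive_affine_comb; [exact (HdR t Ht) |].
      exact (is_derive_RInt_halfline q 0 Hq Hq_right t Ht).
    - intros t _. unfold b, q. field. lra.
    - rewrite <- HS_0. exact HS_right.
    - apply filterlim_affine_comb; [rewrite <- HR_0; exact HR_right |].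
      exact (RInt_at_right q 0 Hq Hq_right).
    - exact HS_lim.
    - apply filterlim_affine_comb; [exact HR_lim |].
      apply filterlim_RInt_of_is_RInt_gen.
      exact (is_RInt_gen_vacc_rate pi1 pi2 D1 D2 _ _ HD1bar HD2bar). }
  replace (b * (R0 - R0) + / N * 0) with 0 in Hcons by ring.
  rewrite exp_0, Rmult_1_r in Hcons.
  rewrite (ln_eq_of_mul_exp _ _ _ HS0 Hcons). unfold b, Qbar. field. lra.
Qed.
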